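(* There exists a continuous function $f\colon[0,1]\to\mathbb{R}$ such that, with $x_n:=\sum_{k=1}^{n-1} f\big(\tfrac kn\big)$ and $y_n:=x_{n+1}-x_n$ for natural $n$, the limit $\lim_{n\to\infty} y_n$ does not exist. *)

From Stdlib Require Import Reals.
Open Scope R_scope.

Definition continuous_on_01 (f : R -> R) : Prop :=
  forall x, 0 <= x <= 1 ->
    forall eps, eps > 0 -> exists delta, delta > 0 /\
      forall y, 0 <= y <= 1 -> Rabs (y - x) < delta -> Rabs (f y - f x) < eps.

Fixpoint partial_sum (g : nat -> R) (m : nat) : R :=
  match m with
  | O => 0
  | S m' => partial_sum g m' + g m
  end.
(* partial_sum g m = g 1 + ... + g m *)

Definition xseq (f : R -> R) (n : nat) : R :=
  partial_sum (fun k => f (INR k / INR n)) (n - 1).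

Definition yseq (f : R -> R) (n : nat) : R := xseq f (S n) - xseq f n.

From Stdlib Require Import Reals Lra Lia ZArith.
From Coquelicot Require Import Coquelicot.
Open Scope R_scope.

(* Take f(x) = sum_l 2^-l cos(2 pi 2^l x), continuous as a normally convergent
   series.  The cosine sum S(m, n) = sum_{k=1}^{n-1} cos(2 pi m k / n) equals n - 1
   when n divides m and -1 otherwise, and x_n = sum_l 2^-l S(2^l, n).  So x_n = -2
   for odd n > 1, whereas for n = 2^i the terms l >= i contribute 2^-l (2^i - 1)
   and x_{2^i} = 0.  Hence y_{2^i - 1} = 2 and y_{2^i} = -2 for all i >= 2. *)

Lemma continuous_on_01_of_continuity (f : R -> R) :
  continuity f -> continuous_on_01 f.
Proof.
  intros Hf x _ eps Heps.
  destruct (Hf x eps Heps) as [delta [Hdelta Hclose]].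
  exists delta. split; [exact Hdelta|].
  intros y _ Hy.
  destruct (Req_dec x y) as [<-|Hxy].
  - rewrite Rminus_eq_0, Rabs_R0. exact Heps.
  - apply (Hclose y). split; [split; [exact I|exact Hxy] | exact Hy].
Qed.

Lemma CVN_R_of_bound (fn : nat -> R -> R) (M : nat -> R) (s : R) :
  is_series M s -> (forall n x, Rabs (fn n x) <= M n) -> CVN_R fn.
Proof.
  intros HM Hbound r.
  exists M, s. split.
  - apply is_series_Reals.
    apply is_series_ext with M; [|exact HM].
    intros n. symmetry. apply Rabs_pos_eq.
    apply Rle_trans with (Rabs (fn n 0)); [apply Rabs_pos|apply Hbound].
  - intros n y _. apply Hbound.
Qed.

Lemma continuity_Series (fn : nat -> R -> R) :
  CVN_R fn -> (forall n, continuity (fn n)) ->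
  continuity (fun x => Series (fun n => fn n x)).
Proof.
  intros Hnormal Hcont x.
  set (cv := CVN_R_CVS fn Hnormal).
  apply continuity_pt_ext with (SFL fn cv).
  - intros y. unfold SFL. destruct (cv y) as [l Hl].
    symmetry. apply is_series_unique, is_series_Reals. exact Hl.
  - apply SFL_continuity; assumption.
Qed.

Lemma is_series_0 : is_series (fun _ : nat => 0) 0.
Proof.
  apply (filterlim_ext (fun _ => zero)); [|apply filterlim_const].
  intros n. symmetry. exact (sum_n_m_const_zero 0 n).
Qed.

Lemma is_series_half_pow : is_series (fun l => (/ 2) ^ l) 2.
Proof.
  pose proof (is_series_geom (/ 2) ltac:(rewrite Rabs_pos_eq; lra)) as Hgeom.
  replace (/ (1 - / 2)) with 2 in Hgeom by field.
  exact Hgeom.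
Qed.

Lemma is_series_shift (a : nat -> R) (n : nat) (l : R) :
  (0 < n)%nat -> is_series (fun k => a (n + k)%nat) l ->
  is_series a (sum_f_R0 a (pred n) + l).
Proof.
  intros Hn Htail. apply (is_series_decr_n a n); [exact Hn|].
  (* The goal's [sum_n] carries a different, convertible instance: rewrite [Htail] instead. *)
  assert (Hl : l = plus (sum_f_R0 a (pred n) + l) (opp (sum_n a (pred n)))).
  { rewrite sum_n_Reals. cbn. unfold plus, opp. cbn. ring. }
  rewrite Hl in Htail. exact Htail.
Qed.

Lemma partial_sum_ext (g h : nat -> R) (m : nat) :
  (forall k, g k = h k) -> partial_sum g m = partial_sum h m.
Proof. intros Hgh. induction m as [|m IH]; simpl; [reflexivity|now rewrite IH, Hgh]. Qed.

Lemma partial_sum_scal_l (a : R) (g : nat -> R) (m : nat) :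
  partial_sum (fun k => a * g k) m = a * partial_sum g m.
Proof. induction m as [|m IH]; simpl; [ring|rewrite IH; ring]. Qed.

Lemma partial_sum_const (c : R) (m : nat) : partial_sum (fun _ => c) m = INR m * c.
Proof. induction m as [|m IH]; simpl partial_sum; [simpl; ring|rewrite IH, S_INR; ring]. Qed.

Lemma is_series_partial_sum (u : nat -> nat -> R) (s : nat -> R) (m : nat) :
  (forall k, is_series (u k) (s k)) ->
  is_series (fun l => partial_sum (fun k => u k l) m) (partial_sum s m).
Proof.
  intros Hu. induction m as [|m IH]; simpl.
  - apply is_series_0.
  - apply (is_series_plus _ _ _ _ IH (Hu (S m))).
Qed.

Lemma cos_2PI_INR (j : nat) : cos (2 * PI * INR j) = 1.
Proof. replace (2 * PI * INR j) with (0 + 2 * INR j * PI) by ring. now rewrite cos_period, cos_0. Qed.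

Lemma sin_2PI_INR (j : nat) : sin (2 * PI * INR j) = 0.
Proof. replace (2 * PI * INR j) with (0 + 2 * INR j * PI) by ring. now rewrite sin_period, sin_0. Qed.

Lemma partial_sum_cos_telescope (t : R) (j : nat) :
  2 * sin (t / 2) * partial_sum (fun k => cos (INR k * t)) j
  = sin ((2 * INR j + 1) * (t / 2)) - sin (t / 2).
Proof.
  induction j as [|j IH]; cbn [partial_sum].
  - simpl INR. replace ((2 * 0 + 1) * (t / 2)) with (t / 2) by ring. ring.
  - assert (Hstep : sin ((2 * INR (S j) + 1) * (t / 2)) - sin ((2 * INR j + 1) * (t / 2))
                     = 2 * sin (t / 2) * cos (INR (S j) * t)).
    { rewrite form4, S_INR.
      replace (((2 * (INR j + 1) + 1) * (t / 2) + (2 * INR j + 1) * (t / 2)) / 2)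
        with ((INR j + 1) * t) by field.
      replace (((2 * (INR j + 1) + 1) * (t / 2) - (2 * INR j + 1) * (t / 2)) / 2)
        with (t / 2) by field.
      ring. }
    rewrite Rmult_plus_distr_l, IH, <- Hstep. ring.
Qed.

Lemma sin_PI_ratio_eq_0 (m n : nat) :
  (0 < n)%nat -> sin (PI * INR m / INR n) = 0 -> Nat.divide n m.
Proof.
  intros Hn Hsin.
  assert (Hn0 : INR n <> 0) by (apply not_0_INR; lia).
  destruct (sin_eq_0_0 _ Hsin) as [z Hz].
  assert (Hmz : INR m = IZR z * INR n).
  { apply (Rmult_eq_reg_r (PI / INR n)).
    - rewrite Rmult_assoc. replace (INR n * (PI / INR n)) with PI by (field; exact Hn0).
      rewrite <- Hz. field. exact Hn0.
    - apply Rgt_not_eq, Rdiv_lt_0_compat; [apply PI_RGT_0|apply lt_0_INR; lia]. }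
  rewrite !INR_IZR_INZ, <- mult_IZR in Hmz. apply eq_IZR in Hmz.
  assert (Hz0 : (0 <= z)%Z) by nia.
  exists (Z.to_nat z). lia.
Qed.

Definition cos_root_sum (m n : nat) : R :=
  partial_sum (fun k => cos (2 * PI * (INR m * (INR k / INR n)))) (n - 1).

Lemma cos_root_sum_divide (m n : nat) :
  (0 < n)%nat -> Nat.divide n m -> cos_root_sum m n = INR n - 1.
Proof.
  intros Hn [q ->]. unfold cos_root_sum.
  rewrite (partial_sum_ext _ (fun _ => 1)).
  - rewrite partial_sum_const, minus_INR by lia. simpl. ring.
  - intros k. rewrite <- (cos_2PI_INR (q * k)). f_equal.
    rewrite !mult_INR. field. apply not_0_INR. lia.
Qed.

Lemma cos_root_sum_not_divide (m n : nat) :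
  (0 < n)%nat -> ~ Nat.divide n m -> cos_root_sum m n = -1.
Proof.
  intros Hn Hndiv.
  assert (Hn0 : INR n <> 0) by (apply not_0_INR; lia).
  set (t := 2 * PI * INR m / INR n).
  assert (Hsin : sin (t / 2) <> 0).
  { intros H. apply Hndiv, sin_PI_ratio_eq_0; [exact Hn|].
    rewrite <- H. f_equal. unfold t. field. exact Hn0. }
  pose proof (partial_sum_cos_telescope t (n - 1)) as Ht.
  replace ((2 * INR (n - 1) + 1) * (t / 2)) with (2 * PI * INR m - t / 2) in Ht
    by (rewrite minus_INR by lia; unfold t; simpl; field; exact Hn0).
  rewrite sin_minus, sin_2PI_INR, cos_2PI_INR in Ht.
  unfold cos_root_sum.
  rewrite (partial_sum_ext _ (fun k => cos (INR k * t)))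
    by (intros k; f_equal; unfold t; field; exact Hn0).
  apply (Rmult_eq_reg_l (2 * sin (t / 2))); [rewrite Ht; ring|].
  intros H. apply Hsin. lra.
Qed.

Lemma odd_not_divide_pow2 (n l : nat) : Nat.Odd n -> (1 < n)%nat -> ~ Nat.divide n (2 ^ l).
Proof.
  intros [t ->] Hn. induction l as [|l IH]; intros Hdiv.
  - apply Nat.divide_pos_le in Hdiv; simpl in *; lia.
  - apply IH. rewrite Nat.pow_succ_r' in Hdiv. destruct Hdiv as [q Hq].
    destruct (Nat.Even_or_Odd q) as [[r ->]|[r ->]]; [exists r; lia|exfalso; lia].
Qed.

Lemma pow2_divide_pow2 (i l : nat) : Nat.divide (2 ^ i) (2 ^ l) <-> (i <= l)%nat.
Proof.
  split.
  - intros Hdiv. apply (Nat.pow_le_mono_r_iff 2); [lia|].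
    apply Nat.divide_pos_le; [|exact Hdiv]. apply Nat.neq_0_lt_0, Nat.pow_nonzero. lia.
  - intros Hil. exists (2 ^ (l - i))%nat. rewrite <- Nat.pow_add_r. f_equal. lia.
Qed.

Lemma odd_pow2_pred (i : nat) : (1 <= i)%nat -> Nat.Odd (2 ^ i - 1).
Proof.
  intros Hi. destruct i as [|j]; [lia|]. rewrite Nat.pow_succ_r'.
  pose proof (Nat.pow_nonzero 2 j). exists (2 ^ j - 1)%nat. lia.
Qed.

Lemma odd_pow2_succ (i : nat) : (1 <= i)%nat -> Nat.Odd (2 ^ i + 1).
Proof.
  intros Hi. destruct i as [|j]; [lia|]. rewrite Nat.pow_succ_r'. now exists (2 ^ j)%nat.
Qed.

Definition dyadic_wave (l : nat) (x : R) : R := (/ 2) ^ l * cos (2 * PI * (2 ^ l * x)).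

Definition dyadic_series (x : R) : R := Series (fun l => dyadic_wave l x).

Lemma Rabs_dyadic_wave_le (l : nat) (x : R) : Rabs (dyadic_wave l x) <= (/ 2) ^ l.
Proof.
  unfold dyadic_wave. rewrite Rabs_mult, (Rabs_pos_eq ((/ 2) ^ l)) by (apply pow_le; lra).
  rewrite <- (Rmult_1_r ((/ 2) ^ l)) at 2.
  apply Rmult_le_compat_l; [apply pow_le; lra|apply Rabs_le, COS_bound].
Qed.

Lemma dyadic_series_continuity : continuity dyadic_series.
Proof.
  apply continuity_Series.
  - exact (CVN_R_of_bound _ _ _ is_series_half_pow Rabs_dyadic_wave_le).
  - intros l. unfold dyadic_wave. reg.
Qed.

Lemma is_series_dyadic_wave (x : R) : is_series (fun l => dyadic_wave l x) (dyadic_series x).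
Proof.
  apply Series_correct.
  apply (@ex_series_le R_AbsRing R_CompleteNormedModule) with (fun l => (/ 2) ^ l).
  - intros l. apply Rabs_dyadic_wave_le.
  - exists 2. apply is_series_half_pow.
Qed.

Lemma is_series_xseq_dyadic_series (n : nat) :
  is_series (fun l => (/ 2) ^ l * cos_root_sum (2 ^ l) n) (xseq dyadic_series n).
Proof.
  apply is_series_ext with
    (fun l => partial_sum (fun k => dyadic_wave l (INR k / INR n)) (n - 1)).
  - intros l. unfold cos_root_sum, dyadic_wave.
    rewrite <- partial_sum_scal_l. apply partial_sum_ext. intros k.
    rewrite pow_INR. reflexivity.
  - apply is_series_partial_sum. intros k. apply is_series_dyadic_wave.
Qed.

Lemma xseq_dyadic_series_odd (n : nat) :
  Nat.Odd n -> (1 < n)%nat -> xseq dyadic_series n = -2.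
Proof.
  intros Hodd Hn.
  rewrite <- (is_series_unique _ _ (is_series_xseq_dyadic_series n)).
  apply is_series_unique.
  apply is_series_ext with (fun l => (/ 2) ^ l * -1).
  - intros l. rewrite cos_root_sum_not_divide; [reflexivity|lia|].
    apply odd_not_divide_pow2; assumption.
  - replace (-2) with (2 * -1) by ring. apply is_series_scal_r, is_series_half_pow.
Qed.

Lemma xseq_dyadic_series_pow2 (i : nat) : (0 < i)%nat -> xseq dyadic_series (2 ^ i) = 0.
Proof.
  intros Hi.
  assert (Hpos : (0 < 2 ^ i)%nat) by (apply Nat.neq_0_lt_0, Nat.pow_nonzero; lia).
  set (t := fun l => (/ 2) ^ l * cos_root_sum (2 ^ l) (2 ^ i)).
  assert (Hlow : forall l, (l < i)%nat -> t l = (/ 2) ^ l * -1).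
  { intros l Hl. unfold t. rewrite cos_root_sum_not_divide; [reflexivity|exact Hpos|].
    rewrite pow2_divide_pow2. lia. }
  assert (Hhigh : forall k, t (i + k)%nat = (/ 2) ^ k * (1 - (/ 2) ^ i)).
  { intros k. unfold t.
    rewrite cos_root_sum_divide by (exact Hpos || apply pow2_divide_pow2; lia).
    rewrite pow_INR, pow_add, pow_inv. replace (INR 2) with 2 by (simpl; lra).
    field. apply pow_nonzero. lra. }
  assert (Hhead : sum_f_R0 t (pred i) = - (2 - 2 * (/ 2) ^ i)).
  { rewrite (sum_eq _ (fun l => (/ 2) ^ l * -1)) by (intros l Hl; apply Hlow; lia).
    rewrite <- scal_sum, tech3 by lra. replace (S (pred i)) with i by lia. field. }
  rewrite <- (is_series_unique _ _ (is_series_xseq_dyadic_series (2 ^ i))).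
  apply is_series_unique.
  replace 0 with (sum_f_R0 t (pred i) + 2 * (1 - (/ 2) ^ i)) by (rewrite Hhead; ring).
  apply is_series_shift; [exact Hi|].
  apply is_series_ext with (fun k => (/ 2) ^ k * (1 - (/ 2) ^ i)); [intros k; symmetry; apply Hhigh|].
  apply is_series_scal_r, is_series_half_pow.
Qed.

Lemma not_Un_cv_two_values (u : nat -> R) (a b : R) :
  a <> b ->
  (forall N, exists n, (N <= n)%nat /\ u n = a) ->
  (forall N, exists n, (N <= n)%nat /\ u n = b) ->
  ~ exists l, Un_cv u l.
Proof.
  intros Hab Ha Hb [l Hl].
  destruct (Hl (Rabs (a - b) / 2)) as [N HN].
  { apply Rdiv_lt_0_compat; [apply Rabs_pos_lt, Rminus_eq_contra, Hab|lra]. }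
  destruct (Ha N) as [n [Hn Hun]], (Hb N) as [m [Hm Hum]].
  pose proof (HN n Hn) as Hnear_a. pose proof (HN m Hm) as Hnear_b.
  unfold R_dist in *. rewrite Hun in Hnear_a. rewrite Hum in Hnear_b.
  pose proof (Rabs_triang (a - l) (l - b)) as Htri.
  rewrite (Rabs_minus_sym l b) in Htri.
  replace (a - l + (l - b)) with (a - b) in Htri by ring.
  lra.
Qed.

Lemma yseq_dyadic_series_pow2_pred (i : nat) :
  (2 <= i)%nat -> yseq dyadic_series (2 ^ i - 1) = 2.
Proof.
  intros Hi. unfold yseq.
  assert (Hbig : (2 ^ 2 <= 2 ^ i)%nat) by (apply Nat.pow_le_mono_r; lia).
  simpl in Hbig.
  replace (S (2 ^ i - 1)) with (2 ^ i)%nat by lia.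
  rewrite xseq_dyadic_series_pow2 by lia.
  rewrite xseq_dyadic_series_odd; [ring|apply odd_pow2_pred; lia|lia].
Qed.

Lemma yseq_dyadic_series_pow2 (i : nat) :
  (1 <= i)%nat -> yseq dyadic_series (2 ^ i) = -2.
Proof.
  intros Hi. unfold yseq.
  assert (Hbig : (2 ^ 1 <= 2 ^ i)%nat) by (apply Nat.pow_le_mono_r; lia).
  simpl in Hbig.
  replace (S (2 ^ i)) with (2 ^ i + 1)%nat by lia.
  rewrite xseq_dyadic_series_pow2 by lia.
  rewrite xseq_dyadic_series_odd; [ring|apply odd_pow2_succ; lia|lia].
Qed.

Theorem theorem1 :
  exists f : R -> R, continuous_on_01 f /\ ~ (exists l : R, Un_cv (yseq f) l).
Proof.
  exists dyadic_series. split.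
  - apply continuous_on_01_of_continuity, dyadic_series_continuity.
  - apply (not_Un_cv_two_values _ 2 (-2)); [lra| |]; intros N;
      pose proof (Nat.pow_gt_lin_r 2 (N + 2) ltac:(lia)) as Hlarge.
    + exists (2 ^ (N + 2) - 1)%nat. split; [lia|]. apply yseq_dyadic_series_pow2_pred. lia.
    + exists (2 ^ (N + 2))%nat. split; [lia|]. apply yseq_dyadic_series_pow2. lia.
Qed.
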